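(* Let $n$ and $k$ be positive integers such that $n \geq 3(n-k)$ and $n \geq k$. Then $$\left|\mathcal{K}_{k+1}(n+1)\right| = (n-k+1)\,\left|\mathcal{K}_{k}(n)\right|,$$ where $\mathcal{K}_k(n)$ denotes the set of linear chord diagrams of size $n$ in which every chord has length at least $k$.
   Context: A linear chord diagram of size $n$ is a partition of the set $\{1,2,\dots,2n\}$ into blocks of size two, called chords. For a chord $c=\{s_c,e_c\}$ with $s_c<e_c$, $s_c$ is its start point, $e_c$ its end point, and its length is $e_c-s_c$. For positive integers $k,n$, $\mathcal{K}_k(n)$ is the set of all linear chord diagrams of size $n$ such that every chord has length at least $k$. *)

From mathcomp Require Import all_boot.
Set Implicit Arguments. Unset Strict Implicit. Unset Printing Implicit Defensive.

(* Points {1,...,2n} are represented by 'I_(2n) = {0,...,2n-1} (shift by one;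
   chord lengths are differences, hence unaffected). *)

Definition chord_diagram (n : nat) (P : {set {set 'I_(n.*2)}}) : bool :=
  partition P [set: 'I_(n.*2)] && [forall c in P, #|c| == 2].

Definition min_chord_length (n k : nat) (P : {set {set 'I_(n.*2)}}) : bool :=
  [forall c in P, forall i in c, forall j in c, (i < j) ==> (k <= j - i)].

Definition K (k n : nat) : {set {set {set 'I_(n.*2)}}} :=
  [set P | chord_diagram P & min_chord_length k P].

(* Encode a chord diagram by the fixed-point-free involution sending each point
   to the other end of its chord; with all chords of length >= k these are the
   involutions f with |i - f i| >= k.  Put m = n - k, so 3m <= n.  In a diagram
   of size n, the points below 2m all start chords and the points from n + m on
   all end chords, and exactly m of the points below 2m have their partner at
   or beyond n + m.  Insert two new points, at positions 2m and n + m + 1 of the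
   enlarged line: every old chord crosses one of them, so all lengths grow by
   at least one.  Now either join the two new points by a chord, or pick one of
   the m chords {s, t} with s < 2m <= n + m <= t and replace it by {s, n + m + 1}
   and {2m, t}.  The m + 1 resulting diagrams of size n + 1 have all chords of
   length >= k + 1, and every such diagram arises exactly once: deleting the
   two points and joining their partners inverts the construction. *)

From mathcomp Require Import all_boot zify.
Set Implicit Arguments. Unset Strict Implicit. Unset Printing Implicit Defensive.

Definition dist (i j : nat) : nat := (i - j) + (j - i).

Lemma distC i j : dist i j = dist j i.
Proof. rewrite /dist; lia. Qed.

Lemma distE i j : i <= j -> dist i j = j - i.
Proof. rewrite /dist; lia. Qed.

Lemma dist_ltn i j : i < j -> dist i j = j - i.
Proof. by move/ltnW/distE. Qed.

Definition chord_involutions (k n : nat) : {set {ffun 'I_(n.*2) -> 'I_(n.*2)}} :=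
  [set f : {ffun 'I_(n.*2) -> 'I_(n.*2)} |
    [forall i, (f (f i) == i) && (k <= dist i (f i))]].

Lemma chord_involutionsP k n (f : {ffun 'I_(n.*2) -> 'I_(n.*2)}) :
  reflect (involutive f /\ forall i : 'I_(n.*2), k <= dist i (f i))
          (f \in chord_involutions k n).
Proof.
rewrite inE; apply: (iffP forallP) => [f_ok | [fK f_far] i].
  by split=> i; have /andP[/eqP ? ?] := f_ok i.
by rewrite fK eqxx f_far.
Qed.

Section ChordsOfInvolutions.
Variables k n : nat.
Hypothesis k_gt0 : 0 < k.
Local Notation T := 'I_(n.*2).

Definition chords_of (f : {ffun T -> T}) : {set {set T}} := [set [set i; f i] | i : T].

Definition partner (P : {set {set T}}) : {ffun T -> T} :=
  [ffun i => odflt i [pick j in pblock P i :\ i]].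

Lemma far_neq (i j : T) : k <= dist i j -> j != i.
Proof. by move=> ij_far; apply/eqP=> ji; move: ij_far; rewrite ji /dist; lia. Qed.

Lemma chord_of_mem (f : {ffun T -> T}) (i x : T) : involutive f ->
  x \in [set i; f i] -> [set x; f x] = [set i; f i].
Proof. by move=> fK /set2P[-> | ->]; rewrite // fK setUC. Qed.

Lemma chords_of_K f : f \in chord_involutions k n -> chords_of f \in K k n.
Proof.
case/chord_involutionsP=> fK f_far; rewrite inE /chord_diagram -andbA; apply/and3P; split.
- apply/and3P; split.
  + apply/eqP/setP=> x; rewrite inE; apply/bigcupP; exists [set x; f x].
      by apply/imsetP; exists x.
    by rewrite set21.
  + apply/trivIsetP=> _ _ /imsetP[i _ ->] /imsetP[j _ ->] chords_neq.
    rewrite -setI_eq0; apply: contraNT chords_neq => /set0Pn[x /setIP[x_i x_j]].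
    by rewrite -(chord_of_mem fK x_i) (chord_of_mem fK x_j).
  + by apply/negP=> /imsetP[i _ /setP/(_ i)]; rewrite set21 inE.
- apply/forallP=> c; apply/implyP=> /imsetP[i _ ->]; rewrite cards2.
  by have := far_neq (f_far i); rewrite eq_sym => ->.
- apply/forallP=> c; apply/implyP=> /imsetP[a _ ->].
  apply/forall_inP=> i /set2P i_a; apply/forall_inP=> j /set2P j_a.
  apply/implyP=> ij; have := f_far a.
  case: i_a j_a ij => -> [] -> ij; rewrite ?ltnn // in ij.
    by rewrite dist_ltn.
  by rewrite distC dist_ltn.
Qed.

Lemma chords_of_inj : {in chord_involutions k n &, injective chords_of}.
Proof.
move=> f g /chord_involutionsP[fK f_far] /chord_involutionsP[gK _] fg.
apply/ffunP=> i.
have : [set i; f i] \in chords_of g by rewrite -fg; apply/imsetP; exists i.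
case/imsetP=> j _ chord_i.
have i_j : i \in [set j; g j] by rewrite -chord_i set21.
rewrite -(chord_of_mem gK i_j) in chord_i.
have : f i \in [set i; g i] by rewrite -chord_i set22.
by case/set2P=> [fi_i | ->] //; have := far_neq (f_far i); rewrite fi_i eqxx.
Qed.

Lemma pblock_partner P (i : T) : P \in K k n ->
  pblock P i = [set i; partner P i] /\ partner P i != i.
Proof.
rewrite !inE => /andP[/andP[/and3P[/eqP cover_P _ _] /forall_inP chord2] _].
have i_cover : i \in cover P by rewrite cover_P inE.
have /cards2P[x [y [xy Pi]]] := chord2 _ (pblock_mem i_cover).
have [j [j_i Pi_j]] : exists j, j != i /\ pblock P i = [set i; j].
  have := mem_pblock P i; rewrite i_cover Pi => /set2P[] ->.
    by exists y; rewrite eq_sym.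
  by exists x; rewrite setUC.
rewrite /partner ffunE Pi_j; case: pickP => [j' | /(_ j)]; last first.
  by rewrite !inE j_i eqxx orbT.
by rewrite !inE => /andP[j'_i /pred2P[j'_i' | ->]] //; rewrite j'_i' eqxx in j'_i.
Qed.

Lemma partner_involution P : P \in K k n ->
  partner P \in chord_involutions k n /\ chords_of (partner P) = P.
Proof.
move=> PK; move: (PK); rewrite [P \in _]inE.
case/andP=> /andP[/and3P[/eqP cover_P triv_P P0] _] /forall_inP P_far.
have i_cover (i : T) : i \in cover P by rewrite cover_P inE.
have pK : involutive (partner P).
  move=> i; have [Pi pi_i] := pblock_partner i PK.
  have [Ppi ppi_pi] := pblock_partner (partner P i) PK.
  have : pblock P (partner P i) = pblock P i.
    by apply: def_pblock; rewrite ?pblock_mem ?Pi ?set22.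
  rewrite Pi Ppi => /setP/(_ (partner P (partner P i))); rewrite set22.
  by move=> /esym/set2P[-> | ppi] //; rewrite ppi eqxx in ppi_pi.
split.
  apply/chord_involutionsP; split=> // i.
  have [Pi pi_i] := pblock_partner i PK.
  have /forall_inP far_i := P_far _ (pblock_mem (i_cover i)); rewrite Pi in far_i.
  have /forall_inP i_pi := far_i _ (set21 _ _).
  have /forall_inP pi_i' := far_i _ (set22 _ _).
  case: (ltngtP i (partner P i)) => [ilt | igt | /val_inj ieq].
  - by rewrite dist_ltn //; exact: implyP (i_pi _ (set22 _ _)) ilt.
  - by rewrite distC dist_ltn //; exact: implyP (pi_i' _ (set21 _ _)) igt.
  - by rewrite -ieq eqxx in pi_i.
apply/setP=> B; apply/imsetP/idP => [[i _ ->] | BP].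
  by have [<- _] := pblock_partner i PK; exact: pblock_mem.
have /set0Pn[i iB] : B != set0 by apply: contraNneq P0 => <-.
exists i => //; have [<- _] := pblock_partner i PK; exact/esym/def_pblock.
Qed.

Lemma card_K_chord_involutions : #|K k n| = #|chord_involutions k n|.
Proof.
have -> : K k n = chords_of @: chord_involutions k n.
  apply/setP=> P; apply/idP/imsetP => [PK | [f f_inv ->]]; last exact: chords_of_K.
  by have [? ?] := partner_involution PK; exists (partner P).
exact: card_in_imset chords_of_inj.
Qed.

End ChordsOfInvolutions.

Definition is_matching (N d : nat) (g : nat -> nat) : Prop :=
  forall i, i < N -> [/\ g i < N, g (g i) = i & d <= dist i (g i)].

Section InsertChord.
Variables n m : nat.
Hypothesis m_small : 3 * m <= n.

(* The two points added to a diagram of size n; [bump2] is the increasing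
   bijection from [0, 2n) onto [0, 2n + 2) minus {p, q}. *)
Local Notation p := (2 * m).
Local Notation q := (n + m).+1.

Definition bump2 (x : nat) : nat := bump q (bump p x).
Definition unbump2 (y : nat) : nat := unbump p (unbump q y).

(* With s = p the chord {p, q} is added; with s < p the chord {s, g s} is
   replaced by {s, q} and {p, g s}. *)
Definition insert_chord (g : nat -> nat) (s y : nat) : nat :=
  if y == q then s
  else if y == p then (if s < p then bump2 (g s) else q)
  else let x := unbump2 y in
    if (s < p) && (x == s) then q
    else if (s < p) && (x == g s) then p
    else bump2 (g x).

Definition admissible (g : nat -> nat) (s : nat) : bool :=
  (s == p) || (s < p) && (n + m <= g s).

Definition reroute (h : nat -> nat) (y : nat) : nat :=
  let z := h y in if z == q then h p else if z == p then h q else z.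

Definition remove_chords (h : nat -> nat) (x : nat) : nat :=
  unbump2 (reroute h (bump2 x)).

Ltac arith := unfold bump2, unbump2, bump, unbump, dist in *; lia.

Lemma bump2E x : bump2 x = if x < p then x else if x < n + m then x.+1 else x.+2.
Proof.
by rewrite /bump2 /bump; case: (ltnP x p) => ? /=; case: (ltnP x (n + m)) => ? /=; lia.
Qed.

Lemma unbump2E y : y != p -> y != q ->
  unbump2 y = if y < p then y else if y < q then y.-1 else y.-2.
Proof.
rewrite /unbump2 /unbump => /eqP ? /eqP ?.
by case: (ltnP y p) => ? /=; case: (ltnP y q) => ? /=; lia.
Qed.

Lemma bump2K : cancel bump2 unbump2.
Proof. by move=> x; rewrite /bump2 /unbump2 !bumpK. Qed.

Lemma unbump2K y : y != p -> y != q -> bump2 (unbump2 y) = y.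
Proof. move=> /eqP ? /eqP ?; arith. Qed.

Lemma bump2_eq_p x : (bump2 x == p) = false.
Proof. apply/eqP; arith. Qed.

Lemma bump2_eq_q x : (bump2 x == q) = false.
Proof. apply/eqP; arith. Qed.

Lemma bump2_small x : x < p -> bump2 x = x.
Proof. arith. Qed.

Lemma ltn_bump2 x : x < n.*2 -> bump2 x < n.+1.*2.
Proof. arith. Qed.

Lemma ltn_unbump2 y : y < n.+1.*2 -> y != p -> y != q -> unbump2 y < n.*2.
Proof. move=> ? /eqP ? /eqP ?; arith. Qed.

Lemma bump2_onto y : y < n.+1.*2 -> y != p -> y != q ->
  exists2 x, x < n.*2 & y = bump2 x.
Proof. by move=> *; exists (unbump2 y); rewrite ?ltn_unbump2 ?unbump2K. Qed.

Lemma dist_bump2 x y : x < n.*2 -> y < n.*2 -> n - m <= dist x y ->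
  (n - m).+1 <= dist (bump2 x) (bump2 y).
Proof.
wlog le_xy : x y / x <= y => [hw x_lt y_lt | x_lt y_lt].
  case: (leqP x y) => [|/ltnW] yx; first exact: hw.
  by rewrite distC [dist (bump2 x) _]distC; apply: hw.
rewrite !distE ?leq_bump2 // !bump2E.
by case: ifP => ?; case: ifP => ?; try case: ifP => ?; try case: ifP => ?; lia.
Qed.

Lemma dist_unbump2 y z : y != p -> y != q -> z != p -> z != q ->
  (n - m).+1 <= dist y z -> n - m <= dist (unbump2 y) (unbump2 z).
Proof.
wlog le_yz : y z / y <= z => [hw | y_p y_q z_p z_q].
  case: (leqP y z) => [|/ltnW] yz ? ? ? ?; first exact: hw.
  by rewrite distC [dist (unbump2 y) _]distC; apply: hw.
rewrite distE // !unbump2E // /dist.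
by case: ifP => ?; case: ifP => ?; try case: ifP => ?; try case: ifP => ?; lia.
Qed.

Lemma insert_chord_q g s : insert_chord g s q = s.
Proof. by rewrite /insert_chord eqxx. Qed.

Lemma insert_chord_p g s :
  insert_chord g s p = if s < p then bump2 (g s) else q.
Proof. by rewrite /insert_chord ifN ?eqxx //; apply/eqP; lia. Qed.

Lemma insert_chord_bump2 g s x :
  insert_chord g s (bump2 x) =
    if (s < p) && (x == s) then q
    else if (s < p) && (x == g s) then p
    else bump2 (g x).
Proof. by rewrite /insert_chord bump2_eq_q bump2_eq_p bump2K. Qed.

Lemma insert_chord_s g s : s <= p -> insert_chord g s s = q.
Proof.
rewrite leq_eqVlt => /orP[/eqP -> | s_p]; first by rewrite insert_chord_p ltnn.
by rewrite -{2}(bump2_small s_p) insert_chord_bump2 s_p eqxx.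
Qed.

Lemma admissible_le g s : admissible g s -> s <= p.
Proof. by case/orP=> [/eqP -> // | /andP[/ltnW]]. Qed.

Lemma admissible_partner g s : is_matching n.*2 (n - m) g -> admissible g s ->
  s < p -> [/\ g s < n.*2, g (g s) = s & n + m <= g s].
Proof.
move=> g_m /orP[/eqP -> | /andP[_ gs_far] s_p]; first by rewrite ltnn.
by have [] := g_m s ltac:(lia).
Qed.

Lemma insert_chord_matching g s :
  is_matching n.*2 (n - m) g -> admissible g s ->
  is_matching n.+1.*2 (n - m).+1 (insert_chord g s).
Proof.
move=> g_m adm y y_lt; have s_le := admissible_le adm.
case: (eqVneq y q) => [-> | y_q].
  by rewrite insert_chord_q insert_chord_s //; split=> //; arith.
case: (eqVneq y p) => [-> | y_p].
  rewrite insert_chord_p; case: (ltnP s p) => s_p; last first.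
    have -> : s = p by lia.
    by rewrite insert_chord_q; split=> //; arith.
  have [gs_lt gsK gs_far] := admissible_partner g_m adm s_p.
  split; [exact: ltn_bump2 | | arith].
  by rewrite insert_chord_bump2 s_p ifN ?eqxx //=; apply/eqP; lia.
have [x x_lt ->] := bump2_onto y_lt y_p y_q.
have [gx_lt gxK gx_far] := g_m x x_lt.
rewrite insert_chord_bump2; case: ifP => [/andP[s_p /eqP x_s] | not_s].
  by rewrite insert_chord_q x_s bump2_small //; split=> //; arith.
case: ifP => [/andP[s_p /eqP x_gs] | not_gs].
  have [_ _ gs_far] := admissible_partner g_m adm s_p.
  by rewrite insert_chord_p s_p -x_gs; split=> //; arith.
split; [exact: ltn_bump2 | | exact: dist_bump2].
rewrite insert_chord_bump2 gxK; case: ifP => [/andP[s_p /eqP gx_s] | _].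
  by move: not_gs; rewrite s_p -gx_s gxK eqxx.
case: ifP => [/andP[s_p /eqP gx_gs] | _ //].
have [_ gsK _] := admissible_partner g_m adm s_p.
by move: not_s; rewrite s_p -gsK -gx_gs gxK eqxx.
Qed.

Lemma remove_insert_chord g s x :
  is_matching n.*2 (n - m) g -> admissible g s -> x < n.*2 ->
  remove_chords (insert_chord g s) x = g x.
Proof.
move=> g_m adm x_lt; rewrite /remove_chords /reroute insert_chord_bump2.
case: (boolP ((s < p) && (x == s))) => [/andP[s_p /eqP ->] | not_s] /=.
  by rewrite eqxx insert_chord_p s_p bump2K.
case: (boolP ((s < p) && (x == g s))) => [/andP[s_p /eqP x_gs] | _] /=.
  have [_ gsK _] := admissible_partner g_m adm s_p.
  rewrite ifN ?eqxx; last by apply/eqP; lia.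
  by rewrite insert_chord_q x_gs gsK /unbump2 /unbump; lia.
by rewrite bump2_eq_q bump2_eq_p bump2K.
Qed.

Section RemoveChords.
Variable h : nat -> nat.
Hypothesis h_m : is_matching n.+1.*2 (n - m).+1 h.

Lemma partner_p : [/\ h p < n.+1.*2, h (h p) = p & q <= h p].
Proof. by have [? ? ?] := @h_m p ltac:(lia); split=> //; arith. Qed.

Lemma partner_q : [/\ h q < n.+1.*2, h (h q) = q & h q <= p].
Proof. by have [? ? ?] := @h_m q ltac:(lia); split=> //; arith. Qed.

Lemma partner_p_gt : h q != p -> q < h p.
Proof.
have [_ aK a_ge] := partner_p => b_p.
have : h p != q by apply: contraNneq b_p => a_q; rewrite -a_q aK.
by move/eqP; lia.
Qed.

Lemma reroute_spec y : y < n.+1.*2 -> y != p -> y != q ->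
  [/\ reroute h y < n.+1.*2, reroute h y != p, reroute h y != q,
      reroute h (reroute h y) = y & (n - m).+1 <= dist y (reroute h y)].
Proof.
move=> y_lt y_p y_q; have [a_lt aK a_ge] := partner_p.
have [b_lt bK b_le] := partner_q; have [z_lt zK z_far] := h_m y_lt.
have p_q : (p == q) = false by apply/eqP; lia.
rewrite /reroute; case: (eqVneq (h y) q) => [z_q | z_q].
  have y_b : y = h q by rewrite -z_q zK.
  have a_gt : q < h p by apply: partner_p_gt; rewrite -y_b.
  by rewrite aK p_q eqxx -y_b; split=> //; arith.
case: (eqVneq (h y) p) => [z_p | z_p].
  have y_a : y = h p by rewrite -z_p zK.
  have b_p : h q != p by apply: contra_neq y_q => b_p; rewrite y_a -b_p bK.
  have a_gt := partner_p_gt b_p.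
  by rewrite bK eqxx -y_a; split=> //; arith.
by rewrite zK (negbTE y_q) (negbTE y_p).
Qed.

Lemma remove_chords_matching : is_matching n.*2 (n - m) (remove_chords h).
Proof.
move=> x x_lt; rewrite /remove_chords.
have [r_lt r_p r_q rK r_far] :=
  reroute_spec (ltn_bump2 x_lt) (negbT (bump2_eq_p x)) (negbT (bump2_eq_q x)).
split; first exact: ltn_unbump2.
  by rewrite unbump2K // rK bump2K.
by rewrite -{1}(bump2K x); apply: dist_unbump2; rewrite ?bump2_eq_p ?bump2_eq_q.
Qed.

Lemma remove_chords_partner_q : h q < p -> remove_chords h (h q) = unbump2 (h p).
Proof.
have [_ bK _] := partner_q => b_p.
by rewrite /remove_chords bump2_small // /reroute bK eqxx.
Qed.

Lemma admissible_remove_chords : admissible (remove_chords h) (h q).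
Proof.
have [_ _ b_le] := partner_q.
apply/orP; case: (eqVneq (h q) p) => b_p; [by left | right].
have b_lt : h q < p by lia.
rewrite b_lt remove_chords_partner_q //=; have := partner_p_gt b_p; arith.
Qed.

Lemma insert_remove_chords y : y < n.+1.*2 ->
  insert_chord (remove_chords h) (h q) y = h y.
Proof.
have [a_lt aK a_ge] := partner_p; have [b_lt bK b_le] := partner_q.
move=> y_lt; case: (eqVneq y q) => [-> | y_q]; first by rewrite insert_chord_q.
case: (eqVneq y p) => [-> | y_p].
  rewrite insert_chord_p; case: (ltnP (h q) p) => b_p; last by have <- : h q = p by lia.
  have a_gt : q < h p by apply: partner_p_gt; lia.
  by rewrite remove_chords_partner_q // unbump2K //; apply/eqP; lia.
have [x x_lt ->] := bump2_onto y_lt y_p y_q.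
rewrite insert_chord_bump2; case: ifP => [/andP[b_p /eqP ->] | not_b].
  by rewrite bump2_small.
case: ifP => [/andP[b_p /eqP x_r] | not_r].
  have a_gt : q < h p by apply: partner_p_gt; lia.
  rewrite x_r remove_chords_partner_q // unbump2K //; apply/eqP; lia.
have [_ r_p r_q _ _] :=
  reroute_spec (ltn_bump2 x_lt) (negbT (bump2_eq_p x)) (negbT (bump2_eq_q x)).
rewrite /remove_chords unbump2K // /reroute.
have [_ zK _] := h_m (ltn_bump2 x_lt).
case: (eqVneq (h (bump2 x)) q) => [z_q | _].
  have x_b : bump2 x = h q by rewrite -z_q zK.
  have b_p : h q < p by rewrite -x_b ltn_neqAle bump2_eq_p /= x_b.
  have x_eq : x = h q by move: x_b b_p; arith.
  by move: not_b; rewrite b_p x_eq eqxx.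
case: (eqVneq (h (bump2 x)) p) => [z_p | //].
have x_a : bump2 x = h p by rewrite -z_p zK.
have b_p : h q < p.
  rewrite ltn_neqAle b_le andbT; apply/eqP=> b_p.
  by move: (bump2_eq_q x); rewrite x_a -b_p bK eqxx.
by move: not_r; rewrite b_p remove_chords_partner_q // -x_a bump2K eqxx.
Qed.

End RemoveChords.

Lemma insert_chord_ext g g' s y : (forall i, i < n.*2 -> g i = g' i) ->
  s <= p -> y < n.+1.*2 -> insert_chord g s y = insert_chord g' s y.
Proof.
move=> gg' s_le y_lt; rewrite /insert_chord.
case: (eqVneq y q) => // y_q; case: (eqVneq y p) => [_ | y_p].
  by case: ifP => // s_p; rewrite gg' //; lia.
have x_lt := ltn_unbump2 y_lt y_p y_q.
by case: (boolP (s < p)) => s_p /=; rewrite !gg' //; lia.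
Qed.

Lemma remove_chords_ext h h' x : (forall i, i < n.+1.*2 -> h i = h' i) ->
  x < n.*2 -> remove_chords h x = remove_chords h' x.
Proof. by move=> hh' x_lt; rewrite /remove_chords /reroute !hh' ?ltn_bump2 //; lia. Qed.

End InsertChord.

Definition natf N (f : {ffun 'I_N -> 'I_N}) (i : nat) : nat :=
  if insub i is Some o then val (f o) else i.

Definition ordf N (g : nat -> nat) : {ffun 'I_N -> 'I_N} :=
  [ffun i : 'I_N => insubd i (g i)].

Lemma natfE N (f : {ffun 'I_N -> 'I_N}) (i : 'I_N) : natf f i = f i.
Proof. by rewrite /natf valK. Qed.

Lemma natf_ordf N (g : nat -> nat) i : i < N -> g i < N -> natf (ordf N g) i = g i.
Proof.
by move=> i_lt gi_lt; rewrite -[i]/(val (Ordinal i_lt)) natfE ffunE val_insubd gi_lt.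
Qed.

Lemma ordf_natf N (f : {ffun 'I_N -> 'I_N}) (g : nat -> nat) :
  (forall i, i < N -> g i = natf f i) -> ordf N g = f.
Proof.
move=> gf; apply/ffunP=> i; apply/val_inj.
by rewrite ffunE gf // natfE val_insubd ltn_ord.
Qed.

Lemma chord_involutions_matching d n (f : {ffun 'I_(n.*2) -> 'I_(n.*2)}) :
  f \in chord_involutions d n -> is_matching n.*2 d (natf f).
Proof.
case/chord_involutionsP=> fK f_far i i_lt.
rewrite -[i]/(val (Ordinal i_lt)) !natfE fK.
by split; [exact: ltn_ord | | exact: f_far].
Qed.

Lemma matching_chord_involutions d n (g : nat -> nat) :
  is_matching n.*2 d g -> ordf n.*2 g \in chord_involutions d n.
Proof.
move=> g_m; apply/chord_involutionsP.
have ordfE (i : 'I_(n.*2)) : val (ordf n.*2 g i) = g i.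
  by have [gi_lt _ _] := g_m i (ltn_ord i); rewrite ffunE val_insubd gi_lt.
split=> [i | i]; last by rewrite ordfE; have [] := g_m i (ltn_ord i).
by apply/val_inj; rewrite !ordfE; have [] := g_m i (ltn_ord i).
Qed.

Lemma card_ord_bounded N c (P : pred nat) : c <= N -> (forall i, P i -> i < c) ->
  #|[set i : 'I_N | P i]| = \sum_(i < c) P i.
Proof.
move=> c_le P_lt; rewrite -sum1_card big_mkcond /=.
rewrite (eq_bigr (fun i : 'I_N => nat_of_bool (P i))) => [|i _]; last first.
  by rewrite inE; case: (P i).
rewrite -(big_mkord xpredT (fun i => nat_of_bool (P i))) (big_cat_nat (n := c)) //=.
rewrite [X in _ + X]big1_seq ?addn0 ?big_mkord // => i; rewrite mem_index_iota.
by case P_i: (P i) => /andP[_ /andP[c_i _]] //; have := P_lt _ P_i; rewrite ltnNge c_i.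
Qed.

Lemma card_ltn_ord N c : c <= N -> #|[set i : 'I_N | i < c]| = c.
Proof.
move=> c_le; rewrite (card_ord_bounded (P := fun i => i < c) c_le) //.
rewrite -[RHS]card_ord -sum1_card.
by apply: eq_bigr => i _; rewrite ltn_ord.
Qed.

Lemma card_descents n (f : {ffun 'I_(n.*2) -> 'I_(n.*2)}) :
  involutive f -> (forall i, f i != i) -> #|[set i | f i < i]| = n.
Proof.
move=> fK f_neq.
have fE : f @: [set i | f i < i] = ~: [set i | f i < i].
  apply/setP=> i; rewrite !inE; apply/imsetP/idP => [[j] | i_asc].
    by rewrite inE => j_desc ->; rewrite fK; lia.
  exists (f i); last by rewrite fK.
  have := f_neq i; rewrite -(inj_eq (@ord_inj _)) inE fK; lia.
have := cardsC [set i | f i < i]; rewrite -fE card_imset ?card_ord; last exact: can_inj fK.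
by rewrite addnn => /double_inj.
Qed.

Section AdmissibleChoices.
Variables n m : nat.
Hypothesis m_small : 3 * m <= n.
Variable f : {ffun 'I_(n.*2) -> 'I_(n.*2)}.
Hypothesis f_ci : f \in chord_involutions (n - m) n.

Let fK : involutive f.
Proof. by case/chord_involutionsP: f_ci. Qed.

Let f_far (i : 'I_(n.*2)) : n - m <= dist i (f i).
Proof. by case/chord_involutionsP: f_ci. Qed.

Lemma card_short_descents : #|[set i | (f i < i) && (i < n + m)]| = m.
Proof.
have f_neq i : f i != i.
  by have := f_far i; have := ltn_ord i; rewrite -(inj_eq (@ord_inj _)) /dist; lia.
have long_desc : [set i | f i < i] :\: [set i : 'I_(n.*2) | i < n + m] =
                 ~: [set i : 'I_(n.*2) | i < n + m].
  apply/setP=> i; rewrite !inE andbC; case: ltnP => //= i_ge.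
  by have := f_far i; have := ltn_ord (f i); rewrite /dist; lia.
have := cardsID [set i : 'I_(n.*2) | i < n + m] [set i | f i < i].
rewrite long_desc card_descents // setIC.
have := cardsC [set i : 'I_(n.*2) | i < n + m]; rewrite card_ltn_ord ?card_ord; last lia.
rewrite (_ : _ :&: _ = [set i | (f i < i) && (i < n + m)]); first lia.
by apply/setP=> i; rewrite !inE andbC.
Qed.

Lemma card_pool : #|[set i : 'I_(n.*2) | (i < 2 * m) && (n + m <= f i)]| = m.
Proof.
set A := [set i : 'I_(n.*2) | (i < 2 * m) && (f i < n + m)].
have fA : f @: A = [set i | (f i < i) && (i < n + m)].
  apply/setP=> i; rewrite inE; apply/imsetP/idP => [[j] | /andP[i_desc i_lt]].
    rewrite inE => /andP[j_lt fj_lt] ->; rewrite fK fj_lt andbT.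
    by have := f_far j; rewrite /dist; lia.
  exists (f i); last by rewrite fK.
  by rewrite inE fK i_lt andbT; have := f_far i; rewrite /dist; lia.
have card_A : #|A| = m by rewrite -card_short_descents -fA card_imset //; exact: can_inj fK.
have := cardsID A [set i : 'I_(n.*2) | i < 2 * m].
rewrite card_ltn_ord; last lia.
rewrite (_ : _ :&: _ = A); last by apply/setP=> i; rewrite /A !inE andbA andbb.
rewrite (_ : _ :\: _ = [set i : 'I_(n.*2) | (i < 2 * m) && (n + m <= f i)]); first lia.
by apply/setP=> i; rewrite /A !inE; case: (i < 2 * m); rewrite //= andbT ltnNge negbK.
Qed.

Lemma card_admissible :
  #|[set s : 'I_(n.+1.*2) | admissible n m (natf f) s]| = m.+1.
Proof.
have pool : #|[set i : 'I_(n.*2) | (i < 2 * m) && (n + m <= natf f i)]| = m.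
  by rewrite -[RHS]card_pool; apply: eq_card => i; rewrite !inE natfE.
rewrite (card_ord_bounded (P := fun i => (i < 2 * m) && (n + m <= natf f i))
  (c := 2 * m)) in pool; [| lia | by move=> i /andP[]].
have adm_lt s : admissible n m (natf f) s -> s < (2 * m).+1.
  by case/orP=> [/eqP -> | /andP[? _]]; lia.
rewrite (card_ord_bounded _ adm_lt); last lia.
rewrite big_ord_recr /= /admissible eqxx addn1 -[in RHS]pool; congr _.+1.
by apply: eq_bigr => i _; rewrite ltn_eqF ?ltn_ord.
Qed.

End AdmissibleChoices.

Section Expansion.
Variables n m : nat.
Hypothesis m_small : 3 * m <= n.

Local Notation F := {ffun 'I_(n.*2) -> 'I_(n.*2)}.
Local Notation F' := {ffun 'I_(n.+1.*2) -> 'I_(n.+1.*2)}.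
Local Notation CI := (chord_involutions (n - m) n).
Local Notation CI' := (chord_involutions (n - m).+1 n.+1).

Definition contract (f' : F') : F := ordf n.*2 (remove_chords n m (natf f')).

Definition expand (f : F) (s : nat) : F' := ordf n.+1.*2 (insert_chord n m (natf f) s).

Fact new_point_lt : (n + m).+1 < n.+1.*2.
Proof. lia. Qed.

Definition new_point : 'I_(n.+1.*2) := Ordinal new_point_lt.

Lemma contract_in f' : f' \in CI' -> contract f' \in CI.
Proof.
move/chord_involutions_matching=> f'_m.
exact/matching_chord_involutions/remove_chords_matching.
Qed.

Lemma expand_in f s : f \in CI -> admissible n m (natf f) s -> expand f s \in CI'.
Proof.
move/chord_involutions_matching=> f_m adm.
exact/matching_chord_involutions/insert_chord_matching.
Qed.

Lemma natf_contract f' x : f' \in CI' -> x < n.*2 ->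
  natf (contract f') x = remove_chords n m (natf f') x.
Proof.
move/chord_involutions_matching=> f'_m x_lt.
by rewrite natf_ordf //; have [] := remove_chords_matching m_small f'_m x_lt.
Qed.

Lemma natf_expand f s y : f \in CI -> admissible n m (natf f) s -> y < n.+1.*2 ->
  natf (expand f s) y = insert_chord n m (natf f) s y.
Proof.
move/chord_involutions_matching=> f_m adm y_lt.
by rewrite natf_ordf //; have [] := insert_chord_matching m_small f_m adm y_lt.
Qed.

Lemma contract_expand f s : f \in CI -> admissible n m (natf f) s ->
  contract (expand f s) = f.
Proof.
move=> f_ci adm; apply: ordf_natf => x x_lt.
rewrite (remove_chords_ext m_small (h' := insert_chord n m (natf f) s)) //.
  exact: remove_insert_chord (chord_involutions_matching f_ci) adm x_lt.
by move=> y y_lt; rewrite natf_expand.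
Qed.

Lemma expand_contract f' : f' \in CI' -> expand (contract f') (f' new_point) = f'.
Proof.
move=> f'_ci; have f'_m := chord_involutions_matching f'_ci.
have [_ _ b_le] := partner_q m_small f'_m.
apply: ordf_natf => y y_lt; rewrite -[val (f' _)](natfE f' new_point).
rewrite (insert_chord_ext m_small (g' := remove_chords n m (natf f'))) //.
  exact: insert_remove_chords.
by move=> x x_lt; rewrite natf_contract.
Qed.

Lemma admissible_contract f' : f' \in CI' ->
  admissible n m (natf (contract f')) (f' new_point).
Proof.
move=> f'_ci.
have := admissible_remove_chords m_small (chord_involutions_matching f'_ci).
rewrite -(natfE f' new_point) /admissible /=; case: (_ == _) => //= /andP[b_p b_far].
by rewrite b_p natf_contract //; lia.
Qed.

Lemma expand_new_point f s : f \in CI -> admissible n m (natf f) s ->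
  (expand f s new_point : nat) = s.
Proof.
move=> f_ci adm; rewrite -(natfE _ new_point) natf_expand //.
exact: insert_chord_q.
Qed.

Lemma card_fiber f : f \in CI -> #|[set f' in CI' | contract f' == f]| = m.+1.
Proof.
move=> f_ci; rewrite -(card_admissible m_small f_ci).
rewrite -(card_in_imset (f := fun f' : F' => f' new_point)) => [|f1 f2]; last first.
  move=> /setIdP[f1_ci /eqP f1_f] /setIdP[f2_ci /eqP f2_f] f12.
  by rewrite -(expand_contract f1_ci) -(expand_contract f2_ci) f1_f f2_f f12.
apply: eq_card => s; rewrite inE; apply/imsetP/idP => [[f'] | adm].
  by move=> /setIdP[f'_ci /eqP <-] ->; exact: admissible_contract.
exists (expand f s); first by apply/setIdP; rewrite expand_in // contract_expand.
by apply: ord_inj; rewrite expand_new_point.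
Qed.

Lemma card_chord_involutions_succ : #|CI'| = m.+1 * #|CI|.
Proof.
rewrite -sum1_card (partition_big contract (mem CI)) /=; last exact: contract_in.
rewrite mulnC -sum_nat_const; apply: eq_bigr => f f_ci.
by rewrite -(card_fiber f_ci) -sum1_card; apply: eq_bigl => f'; rewrite !inE.
Qed.

End Expansion.

Theorem theorem1 (n k : nat) :
  0 < n -> 0 < k -> 3 * (n - k) <= n -> k <= n ->
  #|K k.+1 n.+1| = (n - k + 1) * #|K k n|.
Proof.
move=> _ k_gt0 small k_le.
rewrite !card_K_chord_involutions // addn1.
rewrite -{1 3}(subKn k_le).
exact: card_chord_involutions_succ.
Qed.
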